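(* $\mathfrak{U}(\mathbb{R})$ is a hyperfinite dimensional vector space over $\mathbb{R}^*$, and $\dim\mathfrak{U}(\mathbb{R})\le \ell\cdot\dim\widetilde{\mathcal{C}^1(\mathbb{R})}$.
   Context: Framework (Λ-limits / nonstandard analysis): let $\mathfrak{X}=\mathcal{P}_{fin}(\mathfrak{F}(\mathbb{R},\mathbb{R}))$ be the set of finite sets of real functions on $\mathbb{R}$, directed by inclusion. $\mathbb{R}^*\supset\mathbb{R}$ is a non-Archimedean ordered field whose elements are Λ-limits of nets $\varphi:\mathfrak{X}\to\mathbb{R}$; Λ-limits of nets of sets/functions give internal sets/functions; natural extensions $E^*$, $f^*$ are Λ-limits of constant nets; hyperfinite sets/sums/dimensions are Λ-limits of finite ones. For $\lambda\in\mathfrak{X}$ let $V_\lambda$ be the span of $\lambda$. An internal function $u=\lim_{\lambda\uparrow\Lambda}u_\lambda$ is an ultrafunction if $u_\lambda\in V_\lambda$ for all $\lambda$; for a vector space $W$ of real functions, $\widetilde{W}=W^*\cap\{\text{ultrafunctions}\}$ (a hyperfinite dimensional space). Grid: fix a positive infinite $\beta\in\mathbb{R}^*$ and a hyperfinite set $\Gamma=\{\gamma_0<\dots<\gamma_\ell\}\subset\mathbb{R}^*$ ($\ell$ hypernatural) with $\gamma_0=-\beta$, $\gamma_\ell=\beta$, $0<\gamma_{j+1}-\gamma_j<\eta$ for a fixed infinitesimal $\eta$, and $\mathbb{R}\subseteq\Gamma$. For $j=0,\dots,\ell-1$, $\mathbb{I}_j=(\gamma_j,\gamma_{j+1})_{\mathbb{R}^*}$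 and $\chi_j$ is its characteristic function. $\mathfrak{U}(\mathbb{R})$ is the set of functions $u:[-\beta,\beta]\to\mathbb{R}^*$ representable as an internal hyperfinite sum $u=\sum_{j=0}^{\ell-1}v_j\chi_j$ with each $v_j\in\widetilde{\mathcal{C}^1(\mathbb{R})}$. *)

(* Ultrapower (Lambda-limit) model of R^*, at the level of nets. *)
From HB Require Import structures.
From mathcomp Require Import all_boot all_order all_algebra.
From mathcomp Require Import all_classical all_reals all_analysis.
Set Implicit Arguments. Unset Strict Implicit. Unset Printing Implicit Defensive.
Import Order.TTheory GRing.Theory Num.Theory.
Import numFieldNormedType.Exports.
Local Open Scope classical_set_scope.
Local Open Scope ring_scope.

Definition Xfin (R : realType) := {A : set (R -> R) | finite_set A}.

(** Λ is given by a fine ultrafilter U on 𝔛 (directed by inclusion):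
    Λ-lim φ = Λ-lim ψ  iff  {λ | φ λ = ψ λ} ∈ U. *)
Definition fine_ultrafilter (R : realType) (U : set (set (Xfin R))) : Prop :=
  [/\ U setT /\ ~ U set0,
      (forall A B, U A -> A `<=` B -> U B),
      (forall A B, U A -> U B -> U (A `&` B)),
      (forall A, U A \/ U (~` A)) &
      (forall l : Xfin R, U [set m : Xfin R | proj1_sig l `<=` proj1_sig m])].

Definition ae (R : realType) (U : set (set (Xfin R))) (P : Xfin R -> Prop) : Prop :=
  U [set l | P l].

Definition positive_infinite (R : realType) (U : set (set (Xfin R))) (b : Xfin R -> R) :=
  forall n : nat, ae U (fun l => n%:R < b l).
Definition infinitesimal (R : realType) (U : set (set (Xfin R))) (e : Xfin R -> R) :=
  forall eps : R, 0 < eps -> ae U (fun l => `|e l| < eps).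

Definition grid (R : realType) (U : set (set (Xfin R))) (beta eta : Xfin R -> R)
    (ell : Xfin R -> nat) (gamma : Xfin R -> nat -> R) : Prop :=
  ae U (fun l => [/\ gamma l 0%N = - beta l, gamma l (ell l) = beta l &
     forall j : nat, (j < ell l)%N ->
       0 < gamma l j.+1 - gamma l j /\ gamma l j.+1 - gamma l j < eta l]).

Definition chi (R : realType) (g : nat -> R) (j : nat) (x : R) : R :=
  if (g j < x) && (x < g j.+1) then 1 else 0.

Definition C1 (R : realType) (f : R -> R) : Prop :=
  (forall x : R, derivable f x 1) /\ continuous (derive1 f).

Definition span (R : realType) (A : set (R -> R)) : set (R -> R) :=
  [set f | exists (n : nat) (c : 'I_n -> R) (g : 'I_n -> R -> R),
     (forall i, A (g i)) /\ f = (fun x => \sum_(i < n) c i * g i x)].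

Definition fdim (R : realType) (D : set R) (W : set (R -> R)) (n : nat) : Prop :=
  exists b : 'I_n -> R -> R,
    [/\ (forall c : 'I_n -> R, W (fun x => \sum_(i < n) c i * b i x)),
        (forall c : 'I_n -> R,
            (forall x, D x -> \sum_(i < n) c i * b i x = 0) -> forall i, c i = 0) &
        (forall f, W f -> exists c : 'I_n -> R,
            forall x, D x -> f x = \sum_(i < n) c i * b i x)].

Definition eqD (R : realType) (U : set (set (Xfin R))) (D : Xfin R -> set R)
    (u w : Xfin R -> R -> R) : Prop :=
  ae U (fun l => forall x, D l x -> u l x = w l x).

(** An internal set A of internal functions (on domain Λ-lim D_λ) is a hyperfinite
    dimensional R^*-vector space of (hypernatural) dimension Λ-lim d_λ. *)
Definition hyperfinite_dim (R : realType) (U : set (set (Xfin R))) (D : Xfin R -> set R)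
    (A : (Xfin R -> R -> R) -> Prop) (d : Xfin R -> nat) : Prop :=
  exists W : Xfin R -> set (R -> R),
    ae U (fun l => fdim (D l) (W l) (d l)) /\
    forall u, A u <-> exists w, ae U (fun l => W l (w l)) /\ eqD U D u w.

(** C̃^1(R) = (C^1)^* ∩ {ultrafunctions} *)
Definition C1tilde (R : realType) (U : set (set (Xfin R))) (v : Xfin R -> R -> R) : Prop :=
  ae U (fun l => C1 (v l) /\ span (proj1_sig l) (v l)).

Definition domB (R : realType) (beta : Xfin R -> R) (l : Xfin R) : set R :=
  [set x | - beta l <= x <= beta l].

Definition UR (R : realType) (U : set (set (Xfin R))) (beta : Xfin R -> R)
    (ell : Xfin R -> nat) (gamma : Xfin R -> nat -> R) (u : Xfin R -> R -> R) : Prop :=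
  exists v : Xfin R -> nat -> R -> R,
    ae U (fun l => forall j, (j < ell l)%N -> C1 (v l j) /\ span (proj1_sig l) (v l j)) /\
    eqD U (domB beta) u
        (fun l x => \sum_(j < ell l) v l j x * chi (gamma l) j x).

From Pilot Require Import Defs.
From HB Require Import structures.
From mathcomp Require Import all_boot all_order all_algebra.
From mathcomp Require Import all_classical all_reals all_analysis.
From mathcomp Require Import ring.
Import Order.TTheory GRing.Theory Num.Theory.
Import numFieldNormedType.Exports.
Local Open Scope classical_set_scope.
Local Open Scope ring_scope.
Set Implicit Arguments. Unset Strict Implicit. Unset Printing Implicit Defensive.

(* Everything is proved for each index λ separately and then transferred along
   the ultrafilter.  For a finite set λ of functions, V_λ ∩ C^1 is a subspace of
   the span of λ, hence finite dimensional, say of dimension dC_λ with basis b.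
   The piecewise functions Σ_{j<ℓ} v_j χ_j with v_j ∈ V_λ ∩ C^1 then lie in the
   span of the ℓ·dC_λ functions b_i χ_j, and a subspace of a span of m functions
   has dimension at most m. *)

Section FunctionSpaces.
Variable R : realType.
Implicit Types (D : set R) (S : set (R -> R)) (f h : R -> R).

Definition subspace S :=
  S (fun _ => 0) /\ forall a f h, S f -> S h -> S (fun x => a * f x + h x).

Definition span_on D m (g : nat -> R -> R) f :=
  exists c : nat -> R, forall x, D x -> f x = \sum_(i < m) c i * g i x.

Lemma subspace_sum S n (c : 'I_n -> R) (b : 'I_n -> R -> R) :
  subspace S -> (forall i, S (b i)) -> S (fun x => \sum_(i < n) c i * b i x).
Proof.
move=> [S0 SD]; elim: n c b => [|n IH] c b Sb.
  by under eq_fun do rewrite big_ord0.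
have -> : (fun x => \sum_(i < n.+1) c i * b i x) =
    (fun x => c ord_max * b ord_max x +
       \sum_(i < n) c (widen_ord (leqnSn n) i) * b (widen_ord (leqnSn n) i) x).
  by apply: funext => x; rewrite big_ord_recr addrC.
by apply: SD => //; apply: IH.
Qed.

Lemma subspaceI S S' : subspace S -> subspace S' -> subspace (S `&` S').
Proof.
move=> [S0 SD] [S'0 S'D]; split=> // a f h [Sf S'f] [Sh S'h].
by split; [apply: SD | apply: S'D].
Qed.

Lemma span_on_subspace D m g : subspace (span_on D m g).
Proof.
split; first by exists (fun _ => 0) => x _; rewrite big1 // => i _; rewrite mul0r.
move=> a f h [c Hc] [d Hd]; exists (fun i => a * c i + d i) => x Dx.
rewrite Hc // Hd // mulr_sumr -big_split /=; apply: eq_bigr => i _.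
by rewrite mulrDl mulrA.
Qed.

Lemma span_on_eq D m g f f' :
  span_on D m g f -> (forall x, D x -> f' x = f x) -> span_on D m g f'.
Proof. by move=> [c Hc] E; exists c => x Dx; rewrite E // Hc. Qed.

Lemma mem_basis S n (b : 'I_n -> R -> R) :
  (forall c : 'I_n -> R, S (fun x => \sum_(i < n) c i * b i x)) -> forall i, S (b i).
Proof.
move=> Sb i; have := Sb (fun j => (j == i)%:R); congr S; apply: funext => x.
by rewrite (bigD1 i) //= eqxx mul1r big1 ?addr0 // => j /negPf ->; rewrite mul0r.
Qed.

Definition ord_snoc T n (h : 'I_n -> T) (t : T) (i : 'I_n.+1) : T :=
  if unlift ord_max i is Some j then h j else t.

Lemma ord_snoc_widen T n (h : 'I_n -> T) t i :
  ord_snoc h t (widen_ord (leqnSn n) i) = h i.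
Proof.
have -> : widen_ord (leqnSn n) i = lift ord_max i.
  by apply/val_inj; rewrite /= /bump leqNgt ltn_ord.
by rewrite /ord_snoc liftK.
Qed.

Lemma ord_snoc_max T n (h : 'I_n -> T) t : ord_snoc h t ord_max = t.
Proof. by rewrite /ord_snoc unlift_none. Qed.

Lemma sum_ord_snoc n (c : 'I_n.+1 -> R) (b : 'I_n -> R -> R) f0 x :
  \sum_(i < n.+1) c i * ord_snoc b f0 i x =
  \sum_(i < n) c (widen_ord (leqnSn n) i) * b i x + c ord_max * f0 x.
Proof.
rewrite big_ord_recr /= ord_snoc_max; congr (_ + _); apply: eq_bigr => i _.
by rewrite ord_snoc_widen.
Qed.

Lemma fdim0 D S g : subspace S -> S `<=` span_on D 0 g -> fdim D S 0.
Proof.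
move=> [S0 _] Sspan; exists (fun _ _ => 0); split.
- by move=> c; under eq_fun do rewrite big_ord0.
- by move=> c _ [].
- move=> f /Sspan [c Hc]; exists (fun _ => 0) => x Dx.
  by rewrite Hc // !big_ord0.
Qed.

Lemma fdim_snoc D S S' n f0 :
  subspace S -> S' `<=` S -> fdim D S' n -> S f0 ->
  ~ (exists2 h, S' h & forall x, D x -> f0 x = h x) ->
  (forall f, S f -> exists k, S' (fun x => - k * f0 x + f x)) ->
  fdim D S n.+1.
Proof.
move=> Ssub S'S [b [bS' b_indep b_span]] Sf0 f0_indep S_dec.
have S'b := mem_basis bS'.
exists (ord_snoc b f0); split.
- move=> c; apply: subspace_sum => // i; rewrite /ord_snoc.
  by case: (unlift _ i) => [j|] //; apply/S'S/S'b.
- move=> c c0; have c_max : c ord_max = 0.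
    apply: contra_notP f0_indep => /eqP cN.
    exists (fun x => \sum_(i < n) (- (c ord_max)^-1 * c (widen_ord (leqnSn n) i)) * b i x);
      first exact: bS'.
    move=> x Dx; have := c0 x Dx; rewrite sum_ord_snoc => /eqP; rewrite addr_eq0 => /eqP E.
    under eq_bigr do rewrite -mulrA; rewrite -mulr_sumr E.
    by rewrite mulrN mulNr opprK mulrA mulVf // mul1r.
  have c_widen i : c (widen_ord (leqnSn n) i) = 0.
    move: i; apply: b_indep => x Dx.
    by have := c0 x Dx; rewrite sum_ord_snoc c_max mul0r addr0.
  move=> i; case: (unliftP ord_max i) => [j ->|->] //.
  have -> : lift ord_max j = widen_ord (leqnSn n) j.
    by apply/val_inj; rewrite /= /bump leqNgt ltn_ord.
  exact: c_widen.
- move=> f /S_dec [k /b_span [d Hd]]; exists (ord_snoc d k) => x Dx.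
  rewrite sum_ord_snoc ord_snoc_max.
  under eq_bigr do rewrite ord_snoc_widen.
  by rewrite -Hd // mulNr addrC addrA subrr add0r.
Qed.

Lemma span_on_recl D m g f : span_on D m.+1 g f ->
  exists a0 (a : nat -> R), forall x, D x ->
    f x = a0 * g 0%N x + \sum_(i < m) a i * g i.+1 x.
Proof.
by move=> [c Hc]; exists (c 0%N), (fun i => c i.+1) => x Dx; rewrite Hc // big_ord_recl.
Qed.

(* Either S lies in the span of g 1, ..., g m, or some f0 ∈ S has a nonzero
   coefficient on g 0, and then S = (S ∩ span (g 1, ..., g m)) + ℝ f0. *)
Lemma fdim_sub_span D m : forall g S, subspace S -> S `<=` span_on D m g ->
  exists2 n, (n <= m)%N & fdim D S n.
Proof.
elim: m => [|m IH] g S Ssub Sspan; first by exists 0%N => //; apply: fdim0 Sspan.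
pose g' i := g i.+1.
have [Sg'|] := pselect (S `<=` span_on D m g').
  by have [n nm Sn] := IH g' S Ssub Sg'; exists n => //; apply: leqW.
move=> /existsNP [f0 /not_implyP [Sf0 f0N]].
have [c0 [c Hf0]] := span_on_recl (Sspan f0 Sf0).
have c0N : c0 != 0.
  apply: contra_notN f0N => /eqP c00; exists c => x Dx.
  by rewrite Hf0 // c00 mul0r add0r.
have S'sub := subspaceI Ssub (span_on_subspace D m g').
have [n nm S'n] := IH g' _ S'sub (@subIsetr _ _ _).
exists n.+1 => //; apply: (fdim_snoc Ssub (@subIsetl _ _ _) S'n Sf0).
  by move=> [h [_ h_span] f0h]; apply: f0N; apply: span_on_eq h_span f0h.
move=> f Sf; have [a0 [a Hf]] := span_on_recl (Sspan f Sf).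
set k := a0 / c0; exists k; split; first by case: Ssub => _ SD; apply: SD.
exists (fun i => a i - k * c i) => x Dx.
rewrite Hf // Hf0 // -(divfK c0N a0) -/k /g'.
under [in RHS]eq_bigr do rewrite mulrBl -mulrA.
rewrite sumrB -mulr_sumr; ring.
Qed.

End FunctionSpaces.

Section C1Span.
Variable R : realType.

Lemma C1_0 : C1 (fun _ : R => (0 : R)).
Proof.
split; first by move=> x; exact: derivable_cst.
have -> : derive1 (fun _ : R => (0 : R)) = (fun _ => 0 : R).
  by apply: funext => x; rewrite derive1_cst.
exact: cst_continuous.
Qed.

Lemma C1_comb (a : R) f h : C1 f -> C1 h -> C1 (fun x => a * f x + h x).
Proof.
move=> [df cf] [dh ch]; change (C1 (a \*: f + h)%R).
split; first by move=> x; apply: derivableD => //; apply: derivableZ.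
have -> : derive1 (a \*: f + h)%R = (a \*: derive1 f + derive1 h)%R.
  apply: funext => x; rewrite [RHS]/GRing.add /= !derive1E deriveD ?deriveZ //.
  exact: derivableZ.
move=> x; apply: continuousD; last exact: ch.
by apply: continuousZ; [exact: cst_continuous | exact: cf].
Qed.

Lemma span_seqE (A : set (R -> R)) (s : seq (R -> R)) f :
  A = [set` s] -> Defs.span A f <-> span_on setT (size s) (nth (fun _ => 0) s) f.
Proof.
move=> As; split.
  move=> [n [c [g [Ag ->]]]].
  apply: subspace_sum; first exact: span_on_subspace.
  move=> i; have gi : g i \in s by move: (Ag i); rewrite As.
  have gi_s : (index (g i) s < size s)%N by rewrite index_mem.
  exists (fun k => (k == index (g i) s)%:R) => x _.
  rewrite (bigD1 (Ordinal gi_s)) //= eqxx mul1r nth_index // big1 ?addr0 //.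
  move=> k /eqP kN; suff /negPf -> : (k : nat) != index (g i) s by rewrite mul0r.
  by apply/eqP => E; apply: kN; apply: val_inj.
move=> [c Hc]; exists (size s), (fun i => c i), (fun i => nth (fun _ => 0) s i).
split; first by move=> i; rewrite As /=; apply: mem_nth.
by apply: funext => x; rewrite Hc.
Qed.

Definition C1span (A : set (R -> R)) := [set f | C1 f /\ Defs.span A f].

Lemma C1span_subspace_fdim (A : set (R -> R)) : finite_set A ->
  subspace (C1span A) /\ exists n, fdim setT (C1span A) n.
Proof.
move=> /finite_seqP [s As].
have span_sub : subspace (Defs.span A).
  case: (span_on_subspace setT (size s) (nth (fun _ => 0) s)) => S0 SD.
  by split=> [|a f h /(span_seqE _ As) Sf /(span_seqE _ As) Sh];
     apply/(span_seqE _ As) => //; apply: SD.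
have C1sub : subspace (C1span A).
  case: span_sub => S0 SD; split; first by split; [exact: C1_0 | exact: S0].
  by move=> a f h [Cf Sf] [Ch Sh]; split; [apply: C1_comb | apply: SD].
split=> //; have [n _ fd] := fdim_sub_span C1sub (fun f Hf => proj1 (span_seqE f As) Hf.2).
by exists n.
Qed.

End C1Span.

Section Piecewise.
Variable R : realType.
Implicit Types (D : set R) (W : set (R -> R)) (gam : nat -> R).

Definition cat_fam m1 (g1 g2 : nat -> R -> R) (i : nat) : R -> R :=
  if (i < m1)%N then g1 i else g2 (i - m1)%N.

Lemma span_on_cat D m1 m2 g1 g2 f1 f2 :
  span_on D m1 g1 f1 -> span_on D m2 g2 f2 ->
  span_on D (m1 + m2) (cat_fam m1 g1 g2) (fun x => f1 x + f2 x).
Proof.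
move=> [c1 H1] [c2 H2].
exists (fun i => if (i < m1)%N then c1 i else c2 (i - m1)%N) => x Dx.
rewrite H1 // H2 // big_split_ord /=; congr (_ + _); apply: eq_bigr => i _.
  by rewrite /cat_fam /= ltn_ord.
by rewrite /cat_fam /= ltnNge leq_addr /= addKn.
Qed.

Definition pw_sum gam k (v : nat -> R -> R) (x : R) :=
  \sum_(j < k) v j x * chi gam j x.

Definition pw_space W gam k :=
  [set f | exists2 v, (forall j, (j < k)%N -> W (v j)) & f = pw_sum gam k v].

Definition nat_fam n (b : 'I_n -> R -> R) (i : nat) : R -> R :=
  oapp b (fun _ => 0) (insub i).

(* The functions b_i χ_j (i < n, j < k), listed block by block in j. *)
Fixpoint pw_basis gam n (b : 'I_n -> R -> R) (k : nat) : nat -> R -> R :=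
  if k is k'.+1 then
    cat_fam (k' * n) (pw_basis gam b k') (fun i x => nat_fam b i x * chi gam k' x)
  else fun _ _ => 0.

Lemma span_on_pw_sum D W gam n (b : 'I_n -> R -> R) :
  (forall f, W f -> exists c : 'I_n -> R, forall x, setT x ->
     f x = \sum_(i < n) c i * b i x) ->
  forall k v, (forall j, (j < k)%N -> W (v j)) ->
  span_on D (k * n) (pw_basis gam b k) (pw_sum gam k v).
Proof.
move=> b_span; elim => [|k IH] v Wv.
  by exists (fun _ => 0) => x _; rewrite /pw_sum !big_ord0.
rewrite mulSnr /=; apply: (span_on_eq (f := fun x =>
  pw_sum gam k v x + v k x * chi gam k x)); last first.
  by move=> x _; rewrite /pw_sum big_ord_recr.
apply: span_on_cat; first by apply: IH => j jk; apply/Wv/ltnW.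
have [c Hc] := b_span _ (Wv k (ltnSn k)).
exists (fun i => oapp c 0 (insub i)) => x _.
rewrite Hc // mulr_suml; apply: eq_bigr => i _.
by rewrite /nat_fam valK /= mulrA.
Qed.

Lemma pw_space_subspace W gam k : subspace W -> subspace (pw_space W gam k).
Proof.
move=> [W0 WD]; split.
  exists (fun _ _ => 0) => //; apply: funext => x.
  by rewrite /pw_sum big1 // => j _; rewrite mul0r.
move=> a f h [v Wv ->] [v' Wv' ->].
exists (fun j x => a * v j x + v' j x); first by move=> j jk; apply: WD; auto.
apply: funext => x; rewrite /pw_sum mulr_sumr -big_split /=; apply: eq_bigr => j _.
by rewrite mulrDl mulrA.
Qed.

Lemma pw_space_fdim D W gam k n : subspace W -> fdim setT W n ->
  exists2 d, (d <= k * n)%N & fdim D (pw_space W gam k) d.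
Proof.
move=> Wsub [b [_ _ b_span]].
apply: (@fdim_sub_span _ D (k * n) (pw_basis gam b k)); first exact: pw_space_subspace.
by move=> f [v Wv ->]; exact: (span_on_pw_sum D gam b_span Wv).
Qed.

End Piecewise.

Section Internal.
Variables (R : realType) (U : set (set (Xfin R))).
Hypothesis hU : fine_ultrafilter U.

Lemma ae_impl (P Q : Xfin R -> Prop) : ae U P -> (forall l, P l -> Q l) -> ae U Q.
Proof. by case: hU => _ Umono _ _ _ HP PQ; apply: Umono HP _ => l /PQ. Qed.

Lemma ae_all (P : Xfin R -> Prop) : (forall l, P l) -> ae U P.
Proof. by case: hU => [[UT _] _ _ _ _] HP; apply: ae_impl UT _ => l _; apply: HP. Qed.

Lemma ae_and (P Q : Xfin R -> Prop) : ae U P -> ae U Q -> ae U (fun l => P l /\ Q l).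
Proof. by case: hU => _ _ UI _ _ HP HQ; apply: ae_impl (UI _ _ HP HQ) _ => l []. Qed.

Lemma C1tilde_hyperfinite (dC : Xfin R -> nat) :
  (forall l, fdim setT (C1span (proj1_sig l)) (dC l)) ->
  hyperfinite_dim U (fun _ => setT) (C1tilde U) dC.
Proof.
move=> HdC; exists (fun l => C1span (proj1_sig l)); split; first exact: ae_all.
move=> u; split=> [Hu|[w [Hw Huw]]]; first by exists u; split=> //; exact: ae_all.
apply: ae_impl (ae_and Hw Huw) _ => l [Wl E].
by have -> : u l = w l by apply: funext => x; apply: E.
Qed.

Lemma UR_hyperfinite beta ell gamma (d : Xfin R -> nat) :
  (forall l, fdim (domB beta l)
     (pw_space (C1span (proj1_sig l)) (gamma l) (ell l)) (d l)) ->
  hyperfinite_dim U (domB beta) (UR U beta ell gamma) d.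
Proof.
move=> Hd; exists (fun l => pw_space (C1span (proj1_sig l)) (gamma l) (ell l)).
split; first exact: ae_all.
move=> u; split=> [[v [Hv Huv]]|[w [Hw Huw]]].
  exists (fun l => pw_sum (gamma l) (ell l) (v l)); split=> //.
  by apply: ae_impl Hv _ => l Hl; exists (v l).
have /choice [v Hv] : forall l, exists vl : nat -> R -> R,
    pw_space (C1span (proj1_sig l)) (gamma l) (ell l) (w l) ->
    (forall j, (j < ell l)%N -> C1span (proj1_sig l) (vl j)) /\
    w l = pw_sum (gamma l) (ell l) vl.
  move=> l; case: (pselect (pw_space (C1span (proj1_sig l)) (gamma l) (ell l) (w l)))
    => [[vl Wv E]|nW]; [by exists vl | by exists (fun _ _ => 0) => /nW].
exists v; split; first by apply: ae_impl Hw _ => l /Hv [].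
apply: ae_impl (ae_and Hw Huw) _ => l [/Hv [_ E] E2] x Dx.
by rewrite E2 // E.
Qed.

End Internal.

Theorem mainTheorem2 (R : realType) (U : set (set (Xfin R)))
    (beta eta : Xfin R -> R) (ell : Xfin R -> nat) (gamma : Xfin R -> nat -> R)
    (hU : fine_ultrafilter U)
    (hbeta : positive_infinite U beta)
    (heta : infinitesimal U eta)
    (hgrid : grid U beta eta ell gamma)
    (hRG : forall r : R, ae U (fun l => exists j, (j <= ell l)%N /\ gamma l j = r)) :
  exists dC d : Xfin R -> nat,
    [/\ hyperfinite_dim U (fun _ => setT) (C1tilde U) dC,
        hyperfinite_dim U (domB beta) (UR U beta ell gamma) d &
        ae U (fun l => (d l <= ell l * dC l)%N)].
Proof.
have C1l (l : Xfin R) := C1span_subspace_fdim (proj2_sig l).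
have /choice [dC HdC] : forall l : Xfin R, exists n : nat,
    fdim setT (C1span (proj1_sig l)) n.
  by move=> l; case: (C1l l) => _ [n fd]; exists n.
have /choice [d Hd] : forall l : Xfin R, exists n : nat, (n <= ell l * dC l)%N /\
    fdim (domB beta l) (pw_space (C1span (proj1_sig l)) (gamma l) (ell l)) n.
  move=> l; have [n nle fd] := pw_space_fdim (domB beta l) (gamma l) (ell l) (C1l l).1 (HdC l).
  by exists n.
exists dC, d; split.
- exact: C1tilde_hyperfinite.
- by apply: UR_hyperfinite => // l; exact: (Hd l).2.
- by apply: ae_all => // l; exact: (Hd l).1.
Qed.
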